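(* Let $N\ge2$, $a\in\mathbb{R}$, $\alpha\in(0,1]$, $\sigma_r^2,\sigma_w^2\ge0$. Let $P$ be a symmetric, doubly stochastic $N\times N$ matrix with nonnegative entries and eigenvalues $-1<\lambda_N(P)\le\dots\le\lambda_2(P)<\lambda_1(P)=1$, and suppose $P$ is positive semi-definite. Let $i\neq j$ with $p_{ij}=\epsilon>0$, and let $P_{-\epsilon}=P+\epsilon(\mathbf e_i-\mathbf e_j)(\mathbf e_i-\mathbf e_j)^{\mathsf T}$ be the communication matrix obtained by removing the edge $\{i,j\}$ of weight $\epsilon$ (adding $\epsilon$ to $p_{ii}$ and $p_{jj}$). Assume $|a|<1/|\alpha|$ and that both $a(P-\alpha I_N)$ and $a(P_{-\epsilon}-\alpha I_N)$ have spectral radius less than $1$. For a symmetric matrix $M$ with eigenvalues $\lambda_1(M),\dots,\lambda_N(M)$ define $$\tilde{\mathrm{MSD}}(M,\alpha)=\frac{\sigma_r^2}{1-a^2(1-\alpha)^2}+\frac1N\sum_{k=1}^N\frac{a^2\alpha^2\sigma_w^2\lambda_k^2(M)}{1-a^2(\lambda_k(M)-\alpha)^2}.$$ Then $\tilde{\mathrm{MSD}}(P,\alpha)\le\tilde{\mathrm{MSD}}(P_{-\epsilon},\alpha)$.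
   Context: $\tilde{\mathrm{MSD}}(M,\alpha)$ is the steady-state mean square deviation per agent of the estimator $\tilde{x}_{i,t+1}=a(\sum_jm_{ij}\tilde{x}_{j,t}+\alpha(\sum_jm_{ij}y_{j,t}-\tilde{x}_{i,t}))$ for the model $x_{t+1}=ax_t+r_t$, $y_{i,t}=x_t+w_{i,t}$ with innovation variance $\sigma_r^2$ and observation-noise variance $\sigma_w^2$. $\mathbf e_i$ is the $i$-th standard basis vector of $\mathbb{R}^N$. *)

From mathcomp Require Import all_boot all_order all_algebra complex.
From mathcomp Require Import reals.
Set Implicit Arguments. Unset Strict Implicit. Unset Printing Implicit Defensive.
Import Order.TTheory GRing.Theory Num.Theory.
Local Open Scope ring_scope.

(* s is the list (with multiplicity) of the eigenvalues of M:
   the characteristic polynomial of M splits as prod (X - x), x in s. *)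
Definition is_spectrum (R : realType) (N : nat) (M : 'M[R]_N) (s : seq R) : Prop :=
  char_poly M = \prod_(x <- s) ('X - x%:P).

Definition spectral_radius_lt1 (R : realType) (N : nat) (A : 'M[R]_N) : Prop :=
  forall z : R[i], root (map_poly (fun x : R => (x%:C)%C) (char_poly A)) z -> `|z| < 1.

Definition symmetric_mx (R : realType) (N : nat) (M : 'M[R]_N) : Prop := M^T = M.

Definition doubly_stochastic (R : realType) (N : nat) (M : 'M[R]_N) : Prop :=
  (forall k l, 0 <= M k l) /\
  (forall k, \sum_l M k l = 1) /\ (forall l, \sum_k M k l = 1).

Definition psd (R : realType) (N : nat) (M : 'M[R]_N) : Prop :=
  forall v : 'cV[R]_N, 0 <= (v^T *m M *m v) 0 0.

Definition evec (R : realType) (N : nat) (i : 'I_N) : 'cV[R]_N := delta_mx i 0.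

Definition remove_edge (R : realType) (N : nat) (P : 'M[R]_N) (eps : R) (i j : 'I_N)
  : 'M[R]_N :=
  P + eps *: ((evec R i - evec R j) *m (evec R i - evec R j)^T).

(* MSD~ computed from the eigenvalue list s of M (N = size of matrix) *)
Definition MSDt (R : realType) (N : nat) (a alpha sr2 sw2 : R) (s : seq R) : R :=
  sr2 / (1 - a ^+ 2 * (1 - alpha) ^+ 2)
  + N%:R^-1 * \sum_(l <- s)
      (a ^+ 2 * alpha ^+ 2 * sw2 * l ^+ 2 / (1 - a ^+ 2 * (l - alpha) ^+ 2)).

(* Removing the edge adds the positive semidefinite rank-one term
   eps (e_i - e_j) (e_i - e_j)^T to P, so by Weyl's monotonicity principle,
   for every threshold c, P_{-eps} has at least as many eigenvalues >= c as P.
   Both matrices are positive semidefinite, so all eigenvalues lie in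
   [0, +oo), where the spectral-radius hypotheses keep 1 - a^2 (l - alpha)^2
   positive and the summand K l^2 / (1 - a^2 (l - alpha)^2) is nondecreasing;
   pairing the eigenvalues in decreasing order then compares the two sums term
   by term. *)

From mathcomp Require Import all_boot all_order all_algebra complex.
From mathcomp Require Import reals.
From mathcomp Require Import ring.
Import Order.TTheory GRing.Theory Num.Theory.
Local Open Scope ring_scope.
Local Open Scope sesquilinear_scope.
Set Implicit Arguments. Unset Strict Implicit.

Section UnitaryDiagonalization.
Variables (C : numClosedFieldType) (n : nat).
Implicit Types (U A : 'M[C]_n) (d x : 'rV[C]_n).

Lemma form_unitary_diag U d x :
  (x *m (U^t* *m diag_mx d *m U) *m x^t*) 0 0 =
  \sum_k d 0 k * ((x *m U^t*) 0 k * ((x *m U^t*) 0 k)^*).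
Proof.
have -> : x *m (U^t* *m diag_mx d *m U) *m x^t* =
    (x *m U^t*) *m diag_mx d *m (x *m U^t*)^t*.
  by rewrite trmx_mul map_mxM trmxCK !mulmxA.
rewrite !mxE; apply: eq_bigr => k _.
by rewrite mul_mx_diag !mxE; ring.
Qed.

Lemma form1_unitary U x : U^t* *m U = 1%:M ->
  (x *m x^t*) 0 0 = \sum_k (x *m U^t*) 0 k * ((x *m U^t*) 0 k)^*.
Proof.
move=> UtU; have -> : x *m x^t* = (x *m U^t*) *m (x *m U^t*)^t*.
  by rewrite trmx_mul map_mxM trmxCK mulmxA -(mulmxA x) UtU mulmx1.
by rewrite !mxE; apply: eq_bigr => k _; rewrite !mxE.
Qed.

Lemma unitary_rowsub U (S : {set 'I_n}) : U *m U^t* = 1%:M ->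
  exists V : 'M[C]_(#|S|, n), (#|S| <= \rank V)%N /\
    forall x, (x <= V)%MS -> forall k, k \notin S -> (x *m U^t*) 0 k = 0.
Proof.
move=> UUt; pose V : 'M[C]_(#|S|, n) := \matrix_(r, j) U (enum_val r) j.
have UUt_entry a b : \sum_j U a j * (U b j)^* = (a == b)%:R.
  have := congr1 (fun M : 'M[C]_n => M a b) UUt; rewrite !mxE => <-.
  by apply: eq_bigr => j _; rewrite !mxE.
exists V; split.
  have VVt : V *m V^t* = 1%:M.
    apply/matrixP => r s; rewrite !mxE -(inj_eq enum_val_inj) -UUt_entry.
    by apply: eq_bigr => j _; rewrite !mxE.
  by have := mxrankM_maxl V (V^t*); rewrite VVt mxrank1.
move=> x /submxP [z ->] k kS; rewrite -mulmxA mxE; apply: big1 => r _.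
have -> : (V *m U^t*) r k = (enum_val r == k)%:R.
  by rewrite !mxE -UUt_entry; apply: eq_bigr => j _; rewrite !mxE.
by case: eqP => [rk | _]; [move: (enum_valP r); rewrite rk (negbTE kS) | rewrite mulr0].
Qed.

Lemma form_unitary_diag_ge c U d (S : {set 'I_n}) x :
  U^t* *m U = 1%:M -> (forall k, k \in S -> c <= d 0 k) ->
  (forall k, k \notin S -> (x *m U^t*) 0 k = 0) ->
  c * (x *m x^t*) 0 0 <= (x *m (U^t* *m diag_mx d *m U) *m x^t*) 0 0.
Proof.
move=> UtU dS xS; rewrite form_unitary_diag (form1_unitary _ UtU) mulr_sumr.
apply: ler_sum => k _; have [kS | kS] := boolP (k \in S).
  by apply: ler_wpM2r; [exact: mul_conjC_ge0 | exact: dS].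
by rewrite xS // mul0r !mulr0.
Qed.

Lemma form_unitary_diag_lt_eq0 c U d (T : {set 'I_n}) x :
  U^t* *m U = 1%:M -> (forall k, k \in T -> d 0 k < c) ->
  (forall k, k \notin T -> (x *m U^t*) 0 k = 0) ->
  c * (x *m x^t*) 0 0 <= (x *m (U^t* *m diag_mx d *m U) *m x^t*) 0 0 -> x = 0.
Proof.
move=> UtU dT xT; set y := x *m U^t*.
have term_ge0 k : 0 <= (c - d 0 k) * (y 0 k * (y 0 k)^*).
  have [kT | kT] := boolP (k \in T); last by rewrite xT // mul0r mulr0.
  by rewrite mulr_ge0 ?mul_conjC_ge0 // subr_ge0 ltW ?dT.
rewrite -subr_le0 form_unitary_diag (form1_unitary _ UtU) mulr_sumr -sumrB.
under eq_bigr do rewrite -mulrBl.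
move=> sum_le0; have sum0 : \sum_k (c - d 0 k) * (y 0 k * (y 0 k)^*) = 0.
  by apply/eqP; rewrite eq_le sum_le0 sumr_ge0.
have y0 : y = 0.
  apply/rowP => k; rewrite [RHS]mxE; have [kT | kT] := boolP (k \in T); last exact: xT.
  move/eqP: (@psumr_eq0P _ _ _ _ (fun k _ => term_ge0 k) sum0 k isT).
  rewrite mulf_eq0 mul_conjC_eq0 subr_eq0 => /orP [/eqP ck | /eqP //].
  by move: (dT k kT); rewrite ck ltxx.
by rewrite -[x]mulmx1 -UtU mulmxA -/y y0 mul0mx.
Qed.

(* A nonzero x in both spans would satisfy
   c |x|^2 <= x^* A x <= x^* B x < c |x|^2, so the two spans are independent. *)
Lemma card_unitary_diag_ge_le (c : C) (UA UB : 'M[C]_n) (dA dB : 'rV[C]_n) :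
  UA *m UA^t* = 1%:M -> UA^t* *m UA = 1%:M ->
  UB *m UB^t* = 1%:M -> UB^t* *m UB = 1%:M ->
  (forall k, dB 0 k \is Num.real) -> c \is Num.real ->
  (forall x, (x *m (UA^t* *m diag_mx dA *m UA) *m x^t*) 0 0 <=
             (x *m (UB^t* *m diag_mx dB *m UB) *m x^t*) 0 0) ->
  (#|[set k | (c <= dA 0 k)%R]| <= #|[set k | (c <= dB 0 k)%R]|)%N.
Proof.
move=> UAUAt UAtUA UBUBt UBtUB dB_real c_real formAB.
set S := [set k | c <= dA 0 k]; set T := [set k | dB 0 k < c].
have [V [rankV V_S]] := unitary_rowsub S UAUAt.
have [W [rankW W_T]] := unitary_rowsub T UBUBt.
have VW0 : (V :&: W)%MS = 0.
  apply/eqP; rewrite -submx0; apply/rV_subP => x xVW.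
  have xV := submx_trans xVW (capmxSl _ _); have xW := submx_trans xVW (capmxSr _ _).
  rewrite (@form_unitary_diag_lt_eq0 c UB dB T x UBtUB _ (W_T x xW)) ?sub0mx //.
    by move=> k; rewrite inE.
  apply: le_trans (formAB x).
  by apply: (form_unitary_diag_ge UAtUA _ (V_S x xV)) => k; rewrite inE.
have cardT : (#|[set k | (c <= dB 0 k)%R]| + #|T|)%N = n.
  rewrite -[RHS]card_ord -(cardsC [set k | c <= dB 0 k]); congr (_ + _)%N.
  by apply: eq_card => k; rewrite !inE real_ltNge ?dB_real.
rewrite -(leq_add2r #|T|) cardT; apply: leq_trans (leq_add rankV rankW) _.
by rewrite -(mxrank_sum_cap V W) VW0 mxrank0 addn0 rank_leq_col.
Qed.

End UnitaryDiagonalization.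

Lemma card_set_count (T : finType) (p : pred T) :
  #|[set x | p x]| = count p (enum T).
Proof. by rewrite cardsE cardE -size_filter enumT. Qed.

Lemma char_poly_similar (F : fieldType) n (U D : 'M[F]_n) : U \in unitmx ->
  char_poly (invmx U *m D *m U) = char_poly D.
Proof.
move=> Uunit; rewrite /char_poly /char_poly_mx.
set Vp := map_mx polyC (invmx U); set Up := map_mx polyC U.
have VpUp : Vp *m Up = 1%:M by rewrite -map_mxM mulVmx // map_mx1.
have -> : 'X%:M - map_mx polyC (invmx U *m D *m U) =
    Vp *m ('X%:M - map_mx polyC D) *m Up.
  rewrite !map_mxM mulmxBr mulmxBl -/Vp -/Up; congr (_ - _).
  by rewrite mul_mx_scalar -scalemxAl VpUp scalemx1.
by rewrite !det_mulmx mulrAC -det_mulmx VpUp det1 mul1r.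
Qed.

Section RealSymmetric.
Variables (R : rcfType) (n : nat).

Local Notation complexify := (map_mx (real_complex R)).

Lemma complexify_real m p (A : 'M[R]_(m, p)) : complexify A \is a mxOver Num.real.
Proof. by apply/mxOverP => a b; rewrite mxE; apply/complex_realP; eexists. Qed.

Lemma symmetric_unitary_diag (M : 'M[R]_n) (s : seq R) : M^T = M ->
  char_poly M = \prod_(x <- s) ('X - x%:P) ->
  exists U : 'M[R[i]]_n, exists r : 'I_n -> R,
  [/\ U *m U^t* = 1%:M, U^t* *m U = 1%:M,
      complexify M = U^t* *m diag_mx (\row_k (r k)%:C%C) *m U &
      perm_eq s [seq r k | k <- enum 'I_n]].
Proof.
move=> Msym charM; set Mc := complexify M.
have Mc_sym : Mc \is symmetricmx.
  by rewrite is_hermitianmxE expr0 scale1r map_mx_id // /Mc map_trmx Msym.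
have /orthomx_spectralP Mc_eq := symmetric_normalmx Mc_sym (complexify_real M).
set U := spectralmx Mc in Mc_eq; set d := spectral_diag Mc in Mc_eq.
have U_unitary : U \is unitarymx by exact: spectral_unitarymx.
have UUt : U *m U^t* = 1%:M by apply/unitarymxP.
have UtU : U^t* *m U = 1%:M by rewrite -invmx_unitary // mulVmx // spectral_unit.
have perm_d : perm_eq (map (real_complex R) s) [seq d 0 k | k <- enum 'I_n].
  apply: prod_XsubC_eq; rewrite big_map -map_prod_XsubC -charM map_char_poly.
  rewrite -/Mc {1}Mc_eq char_poly_similar ?spectral_unit //.
  rewrite char_poly_trig ?diag_mx_is_trig // big_map big_enum /=.
  by apply: eq_bigr => k _; rewrite mxE eqxx mulr1n.
pose r k := complex.Re (d 0 k).
have d_real k : d 0 k = (r k)%:C%C.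
  have : d 0 k \in map (real_complex R) s by rewrite (perm_mem perm_d) map_f ?mem_enum.
  by case/mapP => x _ dx; rewrite /r dx.
exists U, r; split => //.
  rewrite Mc_eq invmx_unitary //; congr (_ *m diag_mx _ *m _).
  by apply/rowP => k; rewrite !mxE d_real.
apply: (perm_map_inj (@complexI R)); apply: (perm_trans perm_d).
by rewrite (eq_map d_real) map_comp.
Qed.

(* The spectral theorem is available over R[i] only, hence the comparison of
   the quadratic forms over complex vectors. *)
Lemma count_spectrum_ge_le (M M' : 'M[R]_n) (s s' : seq R) :
  M^T = M -> M'^T = M' ->
  char_poly M = \prod_(x <- s) ('X - x%:P) ->
  char_poly M' = \prod_(x <- s') ('X - x%:P) ->
  (forall x : 'rV[R[i]]_n,
     (x *m complexify M *m x^t*) 0 0 <= (x *m complexify M' *m x^t*) 0 0) ->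
  forall c : R, (count (fun l => (c <= l)%R) s <= count (fun l => (c <= l)%R) s')%N.
Proof.
move=> Msym M'sym charM charM' formMM' c.
have [U [r [UUt UtU M_eq perm_r]]] := symmetric_unitary_diag Msym charM.
have [U' [r' [U'U't U't'U' M'_eq perm_r']]] := symmetric_unitary_diag M'sym charM'.
have card_r (f : 'I_n -> R) :
    #|[set k | (c%:C <= (\row_k (f k)%:C) 0 k)%C%R]| = #|[set k | (c <= f k)%R]|.
  by apply: eq_card => k; rewrite !inE mxE lecR.
have := @card_unitary_diag_ge_le _ _ c%:C%C U U' (\row_k (r k)%:C%C) (\row_k (r' k)%:C%C).
rewrite -M_eq -M'_eq !card_r !card_set_count => /(_ UUt UtU U'U't U't'U').
rewrite (permP perm_r) (permP perm_r') !count_map; apply.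
- by move=> k; rewrite mxE; apply/complex_realP; eexists.
- by apply/complex_realP; eexists.
- exact: formMM'.
Qed.

Lemma complexify_form_add_rank1_ge (M : 'M[R]_n) (w : 'cV[R]_n) (e : R)
    (x : 'rV[R[i]]_n) : 0 <= e ->
  (x *m complexify M *m x^t*) 0 0 <=
  (x *m complexify (M + e *: (w *m w^T)) *m x^t*) 0 0.
Proof.
move=> e_ge0; set wc := complexify w.
have wcC : wc^t* = wc^T by rewrite realmxC // /wc map_trmx complexify_real.
have wcT : complexify w^T = wc^T by rewrite map_trmx.
rewrite map_mxD map_mxZ map_mxM wcT mulmxDr mulmxDl [leRHS]mxE lerDl.
rewrite -scalemxAr -scalemxAl mxE mulr_ge0 ?ler0c //.
have -> : x *m (wc *m wc^T) *m x^t* = (x *m wc) *m (x *m wc)^t*.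
  by rewrite trmx_mul map_mxM wcC !mulmxA.
by rewrite mxE sumr_ge0 // => k _; rewrite !mxE mul_conjC_ge0.
Qed.

End RealSymmetric.

Local Close Scope sesquilinear_scope.

Section SumMajorization.
Variable R : realDomainType.
Implicit Types (s t : seq R) (c m M : R).

Local Notation count_ge c s := (count (fun x => (c <= x)%R) s).

Lemma exists_seq_max s : s != [::] -> exists2 m, m \in s & all (fun x => x <= m) s.
Proof.
elim: s => // x [|y s] IH _; first by exists x; rewrite ?mem_head //= lexx.
have [m ms s_le_m] := IH isT; have [xm | mx] := leP x m.
  by exists m; [rewrite in_cons ms orbT | rewrite /= xm].
exists x; first exact: mem_head.
apply/allP => z; rewrite in_cons => /predU1P [-> // | /(allP s_le_m) zm].
exact: le_trans zm (ltW mx).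
Qed.

Lemma count_ge_rem_max s t m M :
  m \in s -> all (fun x => x <= m) s -> M \in t -> m <= M ->
  (forall c, count_ge c s <= count_ge c t)%N ->
  forall c, (count_ge c (rem m s) <= count_ge c (rem M t))%N.
Proof.
move=> ms s_le_m Mt mM dom c; have := dom c.
rewrite (permP (perm_to_rem ms)) (permP (perm_to_rem Mt)) /=.
have [cm | mc] := leP c m; first by rewrite (le_trans cm mM).
suff -> : count_ge c (rem m s) = 0%N by [].
apply/eqP; rewrite -leqn0 leqNgt -has_count; apply/hasP => -[z /mem_rem zs cz].
by move: (le_lt_trans (le_trans cz (allP s_le_m z zs)) mc); rewrite ltxx.
Qed.

(* Match the largest element of s with the largest element of t and recurse. *)
Lemma ler_sum_count_ge (D : pred R) (f : R -> R) s t :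
  {in D &, {homo f : x y / x <= y}} -> all D s -> all D t -> size s = size t ->
  (forall c, count_ge c s <= count_ge c t)%N ->
  \sum_(x <- s) f x <= \sum_(x <- t) f x.
Proof.
move=> f_homo; have [n] := ubnP (size s); elim: n s t => // n IH s t.
have [-> _ _ _ /esym/size0nil -> _ | s_ne] := eqVneq s [::]; first by rewrite !big_nil.
move=> size_s Ds Dt st dom; have [m ms s_le_m] := exists_seq_max s_ne.
have /hasP [M Mt mM] : has (fun x => m <= x) t.
  by rewrite has_count (leq_trans _ (dom m)) // -has_count; apply/hasP; exists m.
rewrite (perm_big _ (perm_to_rem ms)) (perm_big _ (perm_to_rem Mt)) !big_cons.
apply: lerD; first by apply: f_homo => //; [exact: (allP Ds) | exact: (allP Dt)].
apply: IH; last exact: count_ge_rem_max.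
- by rewrite size_rem // -ltnS prednK // lt0n size_eq0.
- by apply/allP => z /mem_rem; apply/allP.
- by apply/allP => z /mem_rem; apply/allP.
- by rewrite !size_rem // st.
Qed.

End SumMajorization.

Lemma ler_msd_summand (R : realFieldType) (a alpha K x y : R) :
  0 <= K -> 0 <= alpha -> a ^+ 2 * alpha ^+ 2 < 1 -> 0 <= x -> x <= y ->
  a ^+ 2 * (x - alpha) ^+ 2 < 1 -> a ^+ 2 * (y - alpha) ^+ 2 < 1 ->
  K * x ^+ 2 / (1 - a ^+ 2 * (x - alpha) ^+ 2) <=
  K * y ^+ 2 / (1 - a ^+ 2 * (y - alpha) ^+ 2).
Proof.
move=> K_ge0 alpha_ge0 a_alpha x_ge0 xy ax ay.
rewrite ler_pdivrMr ?subr_gt0 // mulrAC ler_pdivlMr ?subr_gt0 // -subr_ge0.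
have -> : K * y ^+ 2 * (1 - a ^+ 2 * (x - alpha) ^+ 2) -
    K * x ^+ 2 * (1 - a ^+ 2 * (y - alpha) ^+ 2) =
  K * (y - x) * ((x + y) * (1 - a ^+ 2 * alpha ^+ 2) + 2 * (a ^+ 2 * alpha * x * y)).
  by ring.
have y_ge0 : 0 <= y := le_trans x_ge0 xy.
apply: mulr_ge0; first by apply: mulr_ge0 => //; rewrite subr_ge0.
apply: addr_ge0; first by apply: mulr_ge0; [exact: addr_ge0 | rewrite subr_ge0 ltW].
by rewrite mulr_ge0 // (mulr_ge0 (mulr_ge0 (mulr_ge0 (sqr_ge0 a) alpha_ge0) x_ge0) y_ge0).
Qed.

Lemma size_spectrum (F : fieldType) n (M : 'M[F]_n) (s : seq F) :
  char_poly M = \prod_(x <- s) ('X - x%:P) -> size s = n.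
Proof. by move=> charM; have := size_char_poly M; rewrite charM size_prod_XsubC => -[]. Qed.

Lemma eigenvalue_spectrum (F : fieldType) n (M : 'M[F]_n) (s : seq F) l :
  char_poly M = \prod_(x <- s) ('X - x%:P) -> l \in s -> eigenvalue M l.
Proof. by move=> charM ls; rewrite eigenvalue_root_char charM root_prod_XsubC. Qed.

Lemma sqr_norm_row_gt0 (R : realDomainType) n (v : 'rV[R]_n) :
  v != 0 -> 0 < (v *m v^T) 0 0.
Proof.
move=> v_neq0; have sq_ge0 k : 0 <= v 0 k * v^T k 0 by rewrite mxE -expr2 sqr_ge0.
rewrite lt_def mxE sumr_ge0 // andbT; apply: contra v_neq0 => /eqP sum0.
apply/eqP/rowP => k; have /eqP := @psumr_eq0P _ _ _ _ (fun k _ => sq_ge0 k) sum0 k isT.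
by rewrite mxE -expr2 sqrf_eq0 !mxE => /eqP.
Qed.

Lemma psd_spectrum_ge0 (R : realType) n (M : 'M[R]_n) (s : seq R) l :
  psd M -> is_spectrum M s -> l \in s -> 0 <= l.
Proof.
move=> Mpsd specM ls; have /eigenvalueP [v vM v_neq0] := eigenvalue_spectrum specM ls.
have := Mpsd v^T; rewrite trmxK vM -scalemxAl mxE.
by rewrite pmulr_lge0 // sqr_norm_row_gt0.
Qed.

Lemma spectral_radius_lt1_spectrum (R : realType) n (M : 'M[R]_n) (s : seq R) a alpha l :
  spectral_radius_lt1 (a *: (M - alpha%:M)) -> is_spectrum M s -> l \in s ->
  a ^+ 2 * (l - alpha) ^+ 2 < 1.
Proof.
move=> rad specM ls; have /eigenvalueP [v vM v_neq0] := eigenvalue_spectrum specM ls.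
have : eigenvalue (a *: (M - alpha%:M)) (a * (l - alpha)).
  apply/eigenvalueP; exists v => //.
  by rewrite -scalemxAr mulmxBr vM mul_mx_scalar -scalerBl scalerA.
rewrite eigenvalue_root_char => /(rmorph_root (real_complex R)) /rad rad_lt1.
have : `|a * (l - alpha)| < 1.
  by rewrite -(@ltcR R); exact: le_lt_trans (normc_ge_Re _) rad_lt1.
by rewrite -exprMn -real_normK ?num_real // expr_lt1.
Qed.

Lemma symmetric_add_rank1 (R : realType) n (M : 'M[R]_n) (w : 'cV[R]_n) e :
  symmetric_mx M -> symmetric_mx (M + e *: (w *m w^T)).
Proof. by rewrite /symmetric_mx => Msym; rewrite linearD linearZ /= trmx_mul trmxK Msym. Qed.

Lemma psd_add_rank1 (R : realType) n (M : 'M[R]_n) (w : 'cV[R]_n) e :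
  psd M -> 0 <= e -> psd (M + e *: (w *m w^T)).
Proof.
move=> Mpsd e_ge0 v; rewrite mulmxDr mulmxDl mxE addr_ge0 //.
rewrite -scalemxAr -scalemxAl mxE mulr_ge0 //.
have -> : v^T *m (w *m w^T) *m v = (v^T *m w) *m (v^T *m w)^T.
  by rewrite trmx_mul trmxK !mulmxA.
by rewrite mxE sumr_ge0 // => k _; rewrite !mxE -expr2 sqr_ge0.
Qed.

Lemma sqr_mul_lt1 (R : realFieldType) (a alpha : R) :
  0 < alpha -> `|a| < 1 / `|alpha| -> a ^+ 2 * alpha ^+ 2 < 1.
Proof.
move=> alpha_gt0; rewrite (gtr0_norm alpha_gt0) ltr_pdivlMr // => a_alpha.
rewrite -exprMn -real_normK ?num_real // normrM (gtr0_norm alpha_gt0).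
by rewrite expr_lt1 // mulr_ge0 ?normr_ge0 ?ltW.
Qed.

Theorem proposition2 (R : realType) (N : nat) (a alpha sr2 sw2 eps : R)
  (P : 'M[R]_N) (i j : 'I_N) (sP sQ : seq R) :
  (2 <= N)%N ->
  0 < alpha -> alpha <= 1 ->
  0 <= sr2 -> 0 <= sw2 ->
  symmetric_mx P -> doubly_stochastic P ->
  is_spectrum P sP ->
  (forall l, l \in sP -> -1 < l <= 1) ->
  count_mem 1 sP = 1%N ->
  psd P ->
  i != j -> P i j = eps -> 0 < eps ->
  is_spectrum (remove_edge P eps i j) sQ ->
  `|a| < 1 / `|alpha| ->
  spectral_radius_lt1 (a *: (P - alpha%:M)) ->
  spectral_radius_lt1 (a *: (remove_edge P eps i j - alpha%:M)) ->
  MSDt N a alpha sr2 sw2 sP <= MSDt N a alpha sr2 sw2 sQ.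
Proof.
move=> _ alpha_gt0 _ _ sw2_ge0 Psym _ specP _ _ Ppsd _ _ eps_gt0 specQ a_alpha radP radQ.
have Qsym : symmetric_mx (remove_edge P eps i j) := symmetric_add_rank1 _ _ Psym.
have Qpsd : psd (remove_edge P eps i j) := psd_add_rank1 _ Ppsd (ltW eps_gt0).
have dom := count_spectrum_ge_le Psym Qsym specP specQ
  (fun x => complexify_form_add_rank1_ge _ _ x (ltW eps_gt0)).
pose D := [pred l : R | (0 <= l) && (a ^+ 2 * (l - alpha) ^+ 2 < 1)].
have spectrum_D M s : psd M -> is_spectrum M s ->
    spectral_radius_lt1 (a *: (M - alpha%:M)) -> all D s.
  move=> Mpsd specM radM; apply/allP => l ls.
  by rewrite inE (psd_spectrum_ge0 Mpsd specM ls) (spectral_radius_lt1_spectrum radM specM ls).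
rewrite /MSDt lerD2l ler_wpM2l ?invr_ge0 ?ler0n //.
apply: (ler_sum_count_ge (D := D)); last exact: dom.
- move=> x y /andP [x_ge0 ax] /andP [y_ge0 ay] xy.
  apply: ler_msd_summand => //.
  + exact: mulr_ge0 (mulr_ge0 (sqr_ge0 a) (sqr_ge0 alpha)) sw2_ge0.
  + exact: ltW.
  + exact: sqr_mul_lt1.
- exact: spectrum_D Ppsd specP radP.
- exact: spectrum_D Qpsd specQ radQ.
- by rewrite (size_spectrum specP) (size_spectrum specQ).
Qed.
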